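(* For plane binary tree shapes $t$ let $S_t$, $T$ be as in the context. Then \[ \sum_{\substack{t \in \mathcal{B}_{\le n}\\ |t| \ge \log_4 n}} \left(1 - \frac{[z^n]S_t(z)}{[z^n]T(z)}\right) = \mathcal{O}\!\left(\frac{n}{\log n}\right) \quad \text{as } n\to\infty . \]
   Context: A plane binary tree is a rooted tree in which each node has a left and a right slot, each empty or holding a subtree; $\mathcal{B}_{\le n}$ is the set of (unlabeled) plane binary trees with at most $n$ nodes, and $|t|$ is the number of nodes. A plane increasing binary tree of size $n$ is a plane binary tree whose $n$ nodes are labeled $1,\dots,n$ increasingly along every path from the root; their exponential generating function is $T(z)=z/(1-z)$, so $[z^n]T(z)=1$. A fringe subtree is a node with all its descendants; its shape is obtained by forgetting labels. For a shape $t$ with $k$ nodes, $\ell(t)$ is its number of increasing labelings (equal to $k!$ divided by the product of the sizes of all fringe subtrees of $t$) and $w(t)=\ell(t)/k!$. $S_t(z)$ is the exponential generating function of plane increasing binary trees having no fringe subtree of shape $t$; it is the power series solution of $S_t'(z)=(1+S_t(z))^2-w(t)kz^{k-1}$, $S_t(0)=0$. *)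

From HB Require Import structures.
From mathcomp Require Import all_boot all_order all_algebra.
From mathcomp Require Import all_classical all_reals all_analysis.
Set Implicit Arguments. Unset Strict Implicit. Unset Printing Implicit Defensive.
Import Order.TTheory GRing.Theory Num.Theory.
Local Open Scope ring_scope.

(* Plane binary trees: [Leaf] is an empty slot, [Node l r] a node with left
   and right slots holding l and r. *)
Inductive btree := Leaf | Node of btree & btree.

Fixpoint btree_eqb (s t : btree) : bool :=
  match s, t with
  | Leaf, Leaf => true
  | Node s1 s2, Node t1 t2 => btree_eqb s1 t1 && btree_eqb s2 t2
  | _, _ => false
  end.

Lemma btree_eqP : Equality.axiom btree_eqb.
Proof.
elim=> [|s1 IH1 s2 IH2] [|t1 t2] /=; try by constructor.
apply: (iffP andP) => [[/(IH1 t1) -> /(IH2 t2) ->] //|[<- <-]].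
by split; [apply/(IH1 s1)|apply/(IH2 s2)].
Qed.
HB.instance Definition _ := hasDecEq.Build btree btree_eqP.

Fixpoint bsize (t : btree) : nat :=
  match t with Leaf => 0%N | Node l r => (bsize l + bsize r).+1 end.

Fixpoint hook (t : btree) : nat :=
  match t with Leaf => 1%N | Node l r => (bsize t * hook l * hook r)%N end.

(* l(t): number of increasing labelings = |t|! / prod of fringe-subtree sizes *)
Definition ell (t : btree) : nat := ((bsize t)`! %/ hook t)%N.

Definition wt {R : realType} (t : btree) : R := (ell t)%:R / ((bsize t)`!)%:R.

(* B_{<= n}: list of all plane binary trees with at most n nodes
   (including the empty tree Leaf), each exactly once. *)
Fixpoint trees_le (n : nat) : seq btree :=
  match n with
  | 0 => [:: Leaf]
  | m.+1 => Leaf :: [seq Node lr.1 lr.2 |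
                     lr <- [seq (l, r) | l <- trees_le m, r <- trees_le m]
                     & (bsize lr.1 + bsize lr.2 <= m)%N]
  end.

(* Formal power series over R, represented by coefficient sequences. *)
Definition fps_mul {R : realType} (a b : nat -> R) (m : nat) : R :=
  \sum_(i < m.+1) a i * b (m - i)%N.
Definition fps_deriv {R : realType} (a : nat -> R) (m : nat) : R :=
  m.+1%:R * a m.+1.
Definition fps_1plus {R : realType} (a : nat -> R) (m : nat) : R :=
  (m == 0%N)%:R + a m.

(* S is the (coefficient sequence of the) power series solution of
   S'(z) = (1 + S(z))^2 - w(t) k z^(k-1),  S(0) = 0,  k = |t|. *)
Definition is_S_t {R : realType} (t : btree) (S : nat -> R) : Prop :=
  S 0%N = 0 /\
  forall m : nat,
    fps_deriv S m =
      fps_mul (fps_1plus S) (fps_1plus S) m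
      - (if m == (bsize t).-1 then wt t * (bsize t)%:R else 0).

(* [z^n] T(z) for T(z) = z/(1-z) *)
Definition Tcoef {R : realType} (n : nat) : R := if n == 0%N then 0 else 1.

Definition log4 {R : realType} (x : R) : R := ln x / ln 4.

(* Fix a shape t of size k and write 1 + S_t = sum_j a_j z^j.  Comparing
   coefficients in the equation for S_t shows by induction on j that
   0 <= a_j <= 1 and, because 1 - x y <= (1 - x) + (1 - y) on [0, 1], that the
   deficit 1 - a_j is at most w(t) h_k(j), where h_k solves the linear majorant
   equation below; for j > k, h_k(j) = 2 (j + 1) / ((k + 1) (k + 2)).  Since
   w(t) <= 1 / hook(t) and the 1 / hook(t) over shapes of size k sum to 1
   (the hook-length formula), the sum is at most
   sum_{log_4 n <= k <= n} h_k(n) <= 1 + 2 (n + 1) / (log_4 n + 1) by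
   telescoping, which is O(n / log n). *)

From mathcomp Require Import all_boot all_order all_algebra.
From mathcomp Require Import all_classical all_reals all_analysis.
From mathcomp Require Import ring lra zify.
Set Implicit Arguments. Unset Strict Implicit. Unset Printing Implicit Defensive.
Import Order.TTheory GRing.Theory Num.Theory.
Local Open Scope ring_scope.

Lemma hook_gt0 t : (0 < hook t)%N.
Proof. by elim: t => //= l IHl r IHr; rewrite !muln_gt0 IHl IHr. Qed.

Section Weight.
Variable R : realType.

Lemma wt_ge0 t : 0 <= wt (R:=R) t.
Proof. by rewrite /wt divr_ge0. Qed.

Lemma wt_le1 t : wt (R:=R) t <= 1.
Proof.
rewrite /wt ler_pdivrMr ?mul1r ?ltr0n ?fact_gt0 // ler_nat /ell.
exact: leq_div.
Qed.

Lemma wt_le_inv_hook t : wt (R:=R) t <= (hook t)%:R^-1.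
Proof.
rewrite /wt ler_pdivrMr ?ltr0n ?fact_gt0 // mulrC ler_pdivlMr ?ltr0n ?hook_gt0 //.
by rewrite -natrM ler_nat /ell leq_divM.
Qed.

End Weight.

Lemma bsize_trees_le n t : t \in trees_le n -> (bsize t <= n)%N.
Proof.
case: n => [|n] /=; first by rewrite inE => /eqP ->.
rewrite inE => /predU1P[-> //|/mapP[[l r] /=]].
by rewrite mem_filter /= => /andP[lr_le _] ->.
Qed.

Lemma partition_big_seq_nat (R : nmodType) (T : Type) (s : seq T) (f : T -> nat)
    (P : pred nat) (F : T -> R) N :
  \sum_(t <- s | (f t < N)%N && P (f t)) F t =
  \sum_(a < N | P a) \sum_(t <- s | f t == a) F t.
Proof.
rewrite (exchange_big_dep predT) //= big_mkcond; apply: eq_bigr => t _.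
under eq_bigl => a do rewrite andbC; rewrite big_mkcondr /=.
case: ltnP => [ft_lt|ft_ge] /=.
  by rewrite (big_pred1 (Ordinal ft_lt)) // => a; rewrite eq_sym.
by rewrite big_pred0 // => a; apply: contraTF ft_ge => /eqP ->; rewrite -ltnNge.
Qed.

Lemma sum_inv_hook (R : numFieldType) n k : (k <= n)%N ->
  \sum_(t <- trees_le n | bsize t == k) (hook t)%:R^-1 = 1 :> R.
Proof.
elim: n k => [|n IH] [|k] //= k_le; rewrite big_cons /=.
- by rewrite big_nil invr1 addr0.
- by rewrite big_map big_pred0 // invr1 addr0.
rewrite big_map big_filter_cond big_mkcond big_allpairs_dep /=.
transitivity (\sum_(l <- trees_le n)
    (if (bsize l < k.+1)%N then k.+1%:R^-1 * (hook l)%:R^-1 else 0) : R).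
  apply: eq_bigr => l _.
  case: ltnP => [l_lt|l_ge]; last first.
    by rewrite big1 // => r _; case: ifP => // /andP[_ /eqP]; lia.
  rewrite -[RHS]mulr1 -[X in _ * X](IH (k - bsize l)%N); last lia.
  rewrite mulr_sumr [RHS]big_mkcond; apply: eq_bigr => r _.
  have -> : (bsize l + bsize r <= n)%N && ((bsize l + bsize r).+1 == k.+1)
            = (bsize r == k - bsize l)%N by apply/idP/idP => /eqP; lia.
  case: eqP => // r_eq; have -> : (bsize l + bsize r).+1 = k.+1 by lia.
  by rewrite !natrM !invfM.
rewrite -big_mkcond -mulr_sumr.
under eq_bigl => l do rewrite -[(_ < _)%N]andbT.
rewrite (partition_big_seq_nat _ bsize predT).
rewrite (eq_bigr (fun=> 1)) => [|a _]; last by rewrite IH //; have := ltn_ord a; lia.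
by rewrite sumr_const card_ord -mulr_natr mulVf // pnatr_eq0.
Qed.

Lemma sum_trees_le_inv_hook (R : numFieldType) n (P : pred nat) (f : nat -> R) :
  \sum_(t <- trees_le n | P (bsize t)) f (bsize t) / (hook t)%:R =
  \sum_(a < n.+1 | P a) f a.
Proof.
rewrite big_seq_cond
  (eq_bigl (fun t => (t \in trees_le n) && ((bsize t < n.+1)%N && P (bsize t)))).
  rewrite -big_seq_cond partition_big_seq_nat; apply: eq_bigr => a _.
  have a_le : (a <= n)%N := ltn_ord a.
  rewrite -[RHS]mulr1 -[X in _ * X](sum_inv_hook R a_le) mulr_sumr.
  by apply: eq_bigr => t /eqP ->.
by move=> t; case: (boolP (t \in _)) => //= /bsize_trees_le; rewrite ltnS => ->.
Qed.

Section Majorant.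
Variable R : realType.

(* Coefficients of the solution of H' = 2 H / (1 - z) + k z^(k-1), H(0) = 0. *)
Definition majorant (k n : nat) : R :=
  if (n < k)%N then 0 else if n == k then 1
  else 2 * n.+1%:R / (k.+1%:R * k.+2%:R).

Lemma majorant_ge0 k n : 0 <= majorant k n.
Proof. by rewrite /majorant; case: ifP => // _; case: ifP => // _; exact: divr_ge0. Qed.

Lemma majorant_le k n :
  majorant k n <= 2 * n.+1%:R / (k.+1%:R * k.+2%:R) + (k == n)%:R.
Proof.
have ge0 : 0 <= 2 * n.+1%:R / (k.+1%:R * k.+2%:R) :> R by exact: divr_ge0.
rewrite /majorant eq_sym; case: ltnP => [_|]; first by rewrite addr_ge0.
by case: eqP => _ _; rewrite ?lerDr ?addr0.
Qed.

Lemma sum_majorant k n :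
  \sum_(i < n) majorant k i =
  if (n <= k)%N then 0 else n%:R * n.+1%:R / (k.+1%:R * k.+2%:R).
Proof.
have k12 : (k.+1%:R * k.+2%:R : R) != 0 by rewrite -natrM pnatr_eq0.
elim: n => [|n IH]; first by rewrite big_ord0.
rewrite big_ord_recr /= IH /majorant.
case: (ltngtP n k) => [_|_|->]; rewrite ?addr0 ?add0r ?divff //.
rewrite -[n.+2]addn2 -[n.+1]addn1 -[k.+2]addn2 -[k.+1]addn1 !natrD.
by field; have := ler0n R k; move=> ?; apply/andP; split; apply/eqP; lra.
Qed.

Lemma majorantS k m : (0 < k)%N ->
  m.+1%:R * majorant k m.+1 =
  2 * \sum_(i < m.+1) majorant k i + (m == k.-1)%:R * k%:R.
Proof.
move=> k_gt0; have -> : (m == k.-1) = (m.+1 == k) by case: k k_gt0.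
rewrite sum_majorant /majorant.
by case: (ltngtP m.+1 k) => [_|_|<-] /=; ring.
Qed.

End Majorant.

Section ConvolutionSquare.
Variables (R : realType) (a : nat -> R) (m : nat).
Hypothesis a_le1 : forall i, (i <= m)%N -> a i <= 1.

Lemma fps_mul_sqr_bounds :
  (forall i, (i <= m)%N -> 0 <= a i) -> 0 <= fps_mul a a m <= m.+1%:R.
Proof.
move=> a_ge0.
have -> : m.+1%:R = \sum_(i < m.+1) (1 : R) by rewrite sumr_const card_ord.
apply/andP; split; [apply: sumr_ge0 | apply: ler_sum] => i _;
  have := a_ge0 i (ltn_ord i); have := a_le1 (ltn_ord i);
  have := a_ge0 _ (leq_subr i m); have := a_le1 (leq_subr i m); nra.
Qed.

Lemma fps_mul_sqr_deficit (b : nat -> R) :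
  (forall i, (i <= m)%N -> 1 - a i <= b i) ->
  m.+1%:R - fps_mul a a m <= 2 * \sum_(i < m.+1) b i.
Proof.
move=> ab.
have sum_rev : \sum_(i < m.+1) b (m - i)%N = \sum_(i < m.+1) b i.
  rewrite (reindex_inj rev_ord_inj); apply: eq_bigr => i _.
  by rewrite /= subSS subKn // -ltnS.
have -> : 2 * \sum_(i < m.+1) b i = \sum_(i < m.+1) (b i + b (m - i)%N).
  by rewrite big_split /= sum_rev; ring.
have -> : m.+1%:R = \sum_(i < m.+1) (1 : R) by rewrite sumr_const card_ord.
rewrite -sumrB; apply: ler_sum => i _.
have := a_le1 (ltn_ord i); have := ab i (ltn_ord i).
have := a_le1 (leq_subr i m); have := ab _ (leq_subr i m); nra.
Qed.

End ConvolutionSquare.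

Section Deficit.
Variables (R : realType) (t : btree) (S : nat -> R).
Hypotheses (t_gt0 : (0 < bsize t)%N) (S_sol : is_S_t t S).

Local Notation k := (bsize t).
Local Notation w := (wt (R:=R) t).
Local Notation a := (fps_1plus S).

Lemma is_S_t_coef_bounds j : 0 <= a j <= 1 /\ 1 - a j <= w * majorant R k j.
Proof.
have [S0 S_rec] := S_sol.
elim/ltn_ind: j => -[_|m IH].
  by rewrite /fps_1plus S0 addr0 subrr /majorant t_gt0 mulr0 ler01 lexx.
have a_ge0 i : (i <= m)%N -> 0 <= a i by move/IH => [/andP[]].
have a_le1 i : (i <= m)%N -> a i <= 1 by move/IH => [/andP[]].
have a_def i : (i <= m)%N -> 1 - a i <= w * majorant R k i by move/IH => [].
have /andP[E_ge0 E_le] := fps_mul_sqr_bounds a_le1 a_ge0.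
have E_def := fps_mul_sqr_deficit a_le1 a_def; rewrite -mulr_sumr in E_def.
have rec : m.+1%:R * a m.+1 = fps_mul a a m - (m == k.-1)%:R * (w * k%:R).
  by rewrite /fps_1plus add0r -[LHS]/(fps_deriv S m) S_rec; case: eqP; rewrite ?mul1r ?mul0r.
have maj_rec := majorantS R m t_gt0.
have m_gt0 : 0 < m.+1%:R :> R by rewrite ltr0n.
have w_ge0 := wt_ge0 R t; have w_le1 := wt_le1 R t; have k_ge0 := ler0n R k.
split; last first.
  rewrite -(ler_pM2l m_gt0) mulrBr mulr1 rec [X in _ <= X]mulrCA maj_rec; nra.
rewrite -(pmulr_rge0 _ m_gt0) -[a m.+1 <= 1](ler_pM2l m_gt0) mulr1 rec.
case: eqP => [m_eq|_]; last by rewrite !mul0r subr0 E_ge0 E_le.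
have k_eq : k%:R = m.+1%:R :> R by rewrite m_eq prednK.
have maj_sum0 : \sum_(i < m.+1) majorant R k i = 0.
  by rewrite sum_majorant m_eq prednK // leqnn.
rewrite maj_sum0 mulr0 in E_def.
rewrite mul1r k_eq; apply/andP; split; nra.
Qed.

Lemma is_S_t_deficit n : (0 < n)%N -> 0 <= 1 - S n <= majorant R k n / (hook t)%:R.
Proof.
move=> n_gt0; have [/andP[_ S_le1] S_def] := is_S_t_coef_bounds n.
rewrite /fps_1plus gtn_eqF // add0r in S_le1 S_def.
rewrite subr_ge0 S_le1 (le_trans S_def) // mulrC ler_wpM2l ?majorant_ge0 //.
exact: wt_le_inv_hook.
Qed.

End Deficit.

Lemma sum_inv_consec_tail (R : realFieldType) (L : R) N : 0 <= L ->
  \sum_(a < N | L <= a%:R) (a.+1%:R * a.+2%:R)^-1 <= (L + 1)^-1.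
Proof.
move=> L_ge0.
suff tail_le : \sum_(a < N | L <= a%:R) (a.+1%:R * a.+2%:R)^-1 <=
    (L + 1)^-1 - (Num.max L N%:R + 1)^-1.
  by apply: le_trans tail_le _; rewrite gerBl invr_ge0 addr_ge0 // le_max L_ge0.
elim: N => [|N IH]; first by rewrite big_ord0 max_l // subrr.
rewrite big_mkcond big_ord_recr /= -big_mkcond.
have N_ge0 := ler0n R N.
case: ifP => [L_le|L_gt].
  rewrite !max_r ?(le_trans L_le) ?ler_nat // in IH *.
  have -> : (N.+1%:R * N.+2%:R)^-1 = (N%:R + 1)^-1 - (N.+1%:R + 1)^-1 :> R.
    by rewrite -!natr1; field; apply/andP; split; apply/eqP; lra.
  by rewrite -natr1 in IH *; lra.
rewrite addr0 (le_trans IH) // max_l; last by rewrite ltW // ltNge L_gt.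
have L_le_max : L <= Num.max L N.+1%:R by rewrite le_max lexx.
by rewrite lerD2l lerN2 lef_pV2 ?posrE ?lerD2r //; lra.
Qed.

Lemma sum_majorant_tail (R : realType) (L : R) (P : pred nat) n : 0 <= L ->
  \sum_(a < n.+1 | P a && (L <= a%:R)) majorant R a n <= 2 * n.+1%:R / (L + 1) + 1.
Proof.
move=> L_ge0.
apply: (@le_trans _ _ (\sum_(a < n.+1)
    ((if L <= a%:R then 2 * n.+1%:R / (a.+1%:R * a.+2%:R) else 0) + (a == n :> nat)%:R))).
  rewrite big_mkcond; apply: ler_sum => a _.
  have maj_le := majorant_le R a n; have maj_ge0 := majorant_ge0 R a n.
  have inv_ge0 : 0 <= 2 * n.+1%:R / (a.+1%:R * a.+2%:R) :> R by exact: divr_ge0.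
  by case: (P a); case: (L <= a%:R) => /=; rewrite ?add0r ?ler0n ?addr_ge0.
rewrite big_split /=.
have -> : \sum_(a < n.+1) (a == n :> nat)%:R = 1 :> R.
  by rewrite big_ord_recr /= eqxx big1 ?add0r // => a _; rewrite ltn_eqF.
rewrite lerD2r -big_mkcond /= -mulr_sumr ler_wpM2l ?mulr_ge0 //.
exact: sum_inv_consec_tail.
Qed.

Lemma div_log4_le_div_ln (R : realType) (x : R) : 2 <= x ->
  2 * (x + 1) / (log4 x + 1) + 1 <= (4 * ln 4 + 1) * (x / ln x).
Proof.
move=> x_ge2.
have a_gt0 : 0 < ln x by apply: ln_gt0; lra.
have b_gt0 : 0 < ln (4 : R) by apply: ln_gt0; lra.
have a_lt : ln x < x by apply: ln_sublinear; lra.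
rewrite /log4; set a := ln x in a_gt0 a_lt *; set b := ln (4 : R) in b_gt0 *.
have -> : 2 * (x + 1) / (a / b + 1) = 2 * (x + 1) * b / (a + b).
  by field; apply/andP; split; apply/eqP; lra.
set q := x / a.
have qa : q * a = x by rewrite /q mulfVK // gt_eqF.
have q_ge1 : 1 <= q by rewrite /q ler_pdivlMr // mul1r ltW.
suff : 2 * (x + 1) * b / (a + b) <= 4 * b * q by lra.
rewrite ler_pdivrMr; last lra.
have := mulr_ge0 (mulr_ge0 (ltW b_gt0) (ltW b_gt0)) (le_trans ler01 q_ge1).
nra.
Qed.

Theorem proposition3p8 (R : realType) (S : btree -> nat -> R)
  (HS : forall t, (1 <= bsize t)%N -> is_S_t t (S t)) :
  exists C : R, exists N : nat, forall n : nat, (N <= n)%N ->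
    `| \sum_(t <- trees_le n | (1 <= bsize t)%N && (log4 (n%:R : R) <= (bsize t)%:R))
         (1 - S t n / Tcoef n) |
    <= C * (n%:R / ln (n%:R : R)).
Proof.
exists (4 * ln 4 + 1), 2%N => n n_ge2.
have n_gt0 : (0 < n)%N by apply: leq_trans n_ge2.
have n_ge2R : 2 <= n%:R :> R by rewrite (ler_nat R 2).
set L := log4 (n%:R : R).
have L_ge0 : 0 <= L by rewrite divr_ge0 // ln_ge0 //; lra.
have -> : Tcoef n = 1 :> R by rewrite /Tcoef gtn_eqF.
under eq_bigr do rewrite divr1.
apply: le_trans (ler_norm_sum _ _ _) _.
apply: (@le_trans _ _ (\sum_(t <- trees_le n | (1 <= bsize t)%N && (L <= (bsize t)%:R))
    majorant R (bsize t) n / (hook t)%:R)).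
  apply: ler_sum => t /andP[t_gt0 _].
  have /andP[def_ge0 def_le] := is_S_t_deficit t_gt0 (HS t t_gt0) n_gt0.
  by rewrite ger0_norm.
rewrite (sum_trees_le_inv_hook _ (fun a => (1 <= a)%N && (L <= a%:R)) (fun a => majorant R a n)).
apply: le_trans (sum_majorant_tail (fun a => (1 <= a)%N) n L_ge0) _.
by rewrite -[n.+1%:R]natr1; exact: div_log4_le_div_ln.
Qed.
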